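(* Let $\mathcal{H}_A,\mathcal{H}_1,\mathcal{H}_2$ be finite-dimensional Hilbert spaces and let $\rho$ be a density operator on $\mathcal{H}_A\otimes\mathcal{H}_1\otimes\mathcal{H}_2$. For $k=1,2$ let $\Lambda^{(k)}$ be a positive and trace-preserving linear map on the operators on $\mathcal{H}_k$ (not necessarily completely positive). Let $\{\{M_{a|x}\}_a\}_x$ be a finite collection of POVMs on $\mathcal{H}_A$. Consider the operator $\tilde\rho=(\mathrm{id}_A\otimes\Lambda^{(1)}\otimes\Lambda^{(2)})[\rho]$ and the assemblage with elements $\sigma^{(k)}_{a|x}=\mathrm{tr}_{\mathcal{H}_A,\mathcal{H}_{\neg k}}[(M_{a|x}\otimes\mathbb{I}_1\otimes\mathbb{I}_2)\tilde\rho]$, where $\mathcal{H}_{\neg k}$ denotes the Bob space other than $\mathcal{H}_k$. Then for any finite collections of POVMs $\{\{N^{(1)}_{b_1|y_1}\}_{b_1}\}_{y_1}$ on $\mathcal{H}_1$ and $\{\{N^{(2)}_{b_2|y_2}\}_{b_2}\}_{y_2}$ on $\mathcal{H}_2$, the correlations $$p(a b_1 b_2|x y_1 y_2)=\mathrm{tr}\big[(M_{a|x}\otimes N^{(1)}_{b_1|y_1}\otimes N^{(2)}_{b_2|y_2})\,\tilde\rho\big]$$ admit a quantum realisation.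
   Context: A tripartite conditional distribution $p(a b_1 b_2|x y_1 y_2)$ admits a quantum realisation if there exist Hilbert spaces $\mathcal{K}_A,\mathcal{K}_1,\mathcal{K}_2$, a density operator $\omega$ on $\mathcal{K}_A\otimes\mathcal{K}_1\otimes\mathcal{K}_2$, and POVMs $\{E_{a|x}\}$, $\{F_{b_1|y_1}\}$, $\{G_{b_2|y_2}\}$ on the respective spaces with $p(ab_1b_2|xy_1y_2)=\mathrm{tr}[(E_{a|x}\otimes F_{b_1|y_1}\otimes G_{b_2|y_2})\omega]$. (In the paper, $\tilde\rho$ is interpreted as a state of the toy theory ''Witworld'', in which states are operators that are positive on product effects, and the correlations above are those obtained when the parties measure such a state.) *)

From HB Require Import structures.
From mathcomp Require Import all_boot all_order all_algebra.
From mathcomp Require Import mxtens.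
Set Implicit Arguments. Unset Strict Implicit. Unset Printing Implicit Defensive.
Import Order.TTheory GRing.Theory Num.Theory.
Local Open Scope ring_scope.

(* Scalars: an arbitrary numeric closed field C (e.g. the complex numbers).
   Finite-dimensional Hilbert spaces are C^n, operators are 'M[C]_n,
   and the tensor product is the Kronecker product  A *t B  (mxtens). *)

Definition adjmx (C : numClosedFieldType) m n (A : 'M[C]_(m, n)) : 'M[C]_(n, m) :=
  (map_mx Num.conj A)^T.

Definition psd (C : numClosedFieldType) n (A : 'M[C]_n) : Prop :=
  forall v : 'cV[C]_n, 0 <= (adjmx v *m A *m v) 0 0.

Definition density (C : numClosedFieldType) n (rho : 'M[C]_n) : Prop :=
  psd rho /\ \tr rho = 1.

Definition povm (C : numClosedFieldType) n (O : finType) (E : O -> 'M[C]_n) : Prop :=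
  (forall o, psd (E o)) /\ \sum_(o : O) E o = 1%:M.

Definition positive_map (C : numClosedFieldType) n (L : 'M[C]_n -> 'M[C]_n) : Prop :=
  forall X, psd X -> psd (L X).

Definition trace_preserving (C : numClosedFieldType) n (L : 'M[C]_n -> 'M[C]_n) : Prop :=
  forall X, \tr (L X) = \tr X.

Definition matunit (C : numClosedFieldType) n (i j : 'I_n) : 'M[C]_n := delta_mx i j.

(* tensor product of two maps on operators, f (x) g, defined on
   'M_(m*n) = operators on C^m (x) C^n by linear extension:
   (f (x) g)[X] = sum_{i,j,k,l} X_{(i,k),(j,l)} f(|i><j|) (x) g(|k><l|). *)
Definition tens_map (C : numClosedFieldType) m n
    (f : 'M[C]_m -> 'M[C]_m) (g : 'M[C]_n -> 'M[C]_n) (X : 'M[C]_(m * n)) : 'M[C]_(m * n) :=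
  \sum_(i < m) \sum_(j < m) \sum_(k < n) \sum_(l < n)
     X (mxtens_index (i, k)) (mxtens_index (j, l)) *: (f (@matunit C m i j) *t g (@matunit C n k l)).

(* quantum realisation of a tripartite conditional distribution
   p a b1 b2 x y1 y2 = p(a b1 b2 | x y1 y2), with (finite-dimensional)
   Hilbert spaces K_A (dim dA), K_1 (dim d1), K_2 (dim d2) ordered as
   (K_A (x) K_1) (x) K_2. *)
Definition quantum_realisation (C : numClosedFieldType)
    (X Y1 Y2 A B1 B2 : finType)
    (p : A -> B1 -> B2 -> X -> Y1 -> Y2 -> C) : Prop :=
  exists (dA d1 d2 : nat) (omega : 'M[C]_(dA * d1 * d2))
         (E : X -> A -> 'M[C]_dA) (F : Y1 -> B1 -> 'M[C]_d1) (G : Y2 -> B2 -> 'M[C]_d2),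
    [/\ density omega,
        (forall x, povm (E x)), (forall y1, povm (F y1)), (forall y2, povm (G y2)) &
        forall a b1 b2 x y1 y2,
          p a b1 b2 x y1 y2 = \tr ((E x a *t F y1 b1 *t G y2 b2) *m omega)].

From HB Require Import structures.
From mathcomp Require Import all_boot all_order all_algebra.
From mathcomp Require Import mxtens sesquilinear spectral.
From mathcomp Require Import ring.
Set Implicit Arguments. Unset Strict Implicit. Unset Printing Implicit Defensive.
Import Order.TTheory GRing.Theory Num.Theory.
Local Open Scope ring_scope.

(* Pass to the Heisenberg picture: with [L^*] the adjoint of [L] for the trace
   pairing, tr((M (x) N1 (x) N2) (id (x) L1 (x) L2)[rho])
   = tr((M (x) L1^*(N1) (x) L2^*(N2)) rho).  The adjoint of a positive
   trace-preserving map is positive and unital, so it maps POVMs to POVMs, and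
   (rho, M, L1^*(N1), L2^*(N2)) is a quantum realisation.  No complete
   positivity is needed because the adjoints act on single-system effects; their
   positivity only uses tr(N Z) >= 0 for positive N and Z, a consequence of the
   spectral theorem. *)

Section TraceDual.
Variable C : numClosedFieldType.

Lemma mxtrace_mul_delta n (A : 'M[C]_n) (i j : 'I_n) : \tr (A *m delta_mx i j) = A j i.
Proof.
rewrite /mxtrace (bigD1 j) //= big1 ?addr0 => [|k /negbTE nkj]; rewrite mxE.
  rewrite (bigD1 i) //= big1 ?addr0 => [|l /negbTE nli]; rewrite mxE.
    by rewrite !eqxx mulr1.
  by rewrite nli mulr0.
by rewrite big1 // => l _; rewrite mxE nkj andbF mulr0.
Qed.

Lemma mxtrace_mul_inj n (A B : 'M[C]_n) :
  (forall Y, \tr (A *m Y) = \tr (B *m Y)) -> A = B.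
Proof. by move=> eqAB; apply/matrixP => i j; rewrite -!mxtrace_mul_delta eqAB. Qed.

Definition trace_dual n (L : 'M[C]_n -> 'M[C]_n) (N : 'M[C]_n) : 'M[C]_n :=
  \matrix_(i, j) \tr (N *m L (delta_mx j i)).

Lemma mxtrace_dual n (L : {linear 'M[C]_n -> 'M[C]_n}) (N Y : 'M[C]_n) :
  \tr (trace_dual L N *m Y) = \tr (N *m L Y).
Proof.
rewrite {1 2}(matrix_sum_delta Y) mulmx_sumr (linear_sum L) mulmx_sumr !raddf_sum.
apply: eq_bigr => i _; rewrite mulmx_sumr (linear_sum L) mulmx_sumr !raddf_sum.
apply: eq_bigr => j _.
by rewrite !linearZ /= !mxtraceZ mxtrace_mul_delta mxE.
Qed.

End TraceDual.

Section TensorMaps.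
Variable C : numClosedFieldType.

Lemma mxtrace_tens m n (A : 'M[C]_m) (B : 'M[C]_n) : \tr (A *t B) = \tr A * \tr B.
Proof. by rewrite /mxtrace mulr_sum; apply: eq_bigr => i _; rewrite mxE. Qed.

Lemma big_mxtens_index (V : nmodType) m n (F : 'I_(m * n) -> V) :
  \sum_(r < m * n) F r = \sum_(i < m) \sum_(k < n) F (mxtens_index (i, k)).
Proof.
rewrite pair_big (reindex (@mxtens_index m n)) /=; first by apply: eq_bigr => -[].
by exists (@mxtens_unindex m n) => x _; rewrite (mxtens_indexK, mxtens_unindexK).
Qed.

Lemma tens_delta_mx m n (i j : 'I_m) (k l : 'I_n) :
  delta_mx i j *t delta_mx k l
  = delta_mx (mxtens_index (i, k)) (mxtens_index (j, l)) :> 'M[C]_(m * n).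
Proof.
apply/matrixP => r s; case: (mxtens_indexP r) => i' k'; case: (mxtens_indexP s) => j' l'.
rewrite tensmxE !mxE !(can_eq (@mxtens_indexK _ _)) !xpair_eqE.
by case: (i' == i); case: (j' == j); case: (k' == k); case: (l' == l);
  rewrite ?mulr1 ?mulr0.
Qed.

Lemma tens_map_id m n (X : 'M[C]_(m * n)) : tens_map id id X = X.
Proof.
rewrite {2}(matrix_sum_delta X) big_mxtens_index.
apply: eq_bigr => i _; rewrite exchange_big; apply: eq_bigr => k _.
rewrite big_mxtens_index; apply: eq_bigr => j _; apply: eq_bigr => l _.
by rewrite /matunit tens_delta_mx.
Qed.

Lemma mxtrace_tens_map m n (f : 'M[C]_m -> 'M[C]_m) (g : 'M[C]_n -> 'M[C]_n)
    (P P' : 'M[C]_m) (Q Q' : 'M[C]_n) (X : 'M[C]_(m * n)) :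
  (forall Y, \tr (P *m f Y) = \tr (P' *m Y)) ->
  (forall Y, \tr (Q *m g Y) = \tr (Q' *m Y)) ->
  \tr ((P *t Q) *m tens_map f g X) = \tr ((P' *t Q') *m X).
Proof.
move=> dualPf dualQg; rewrite -{2}(tens_map_id X) /tens_map.
do 4![rewrite !mulmx_sumr !raddf_sum; apply: eq_bigr => ? _].
by rewrite !linearZ /= !mxtraceZ !tensmx_mul !mxtrace_tens dualPf dualQg.
Qed.

End TensorMaps.

Section Positivity.
Variable C : numClosedFieldType.

Definition qform n (A : 'M[C]_n) (v : 'cV[C]_n) : C := (adjmx v *m A *m v) 0 0.

Lemma adjmxE m n (A : 'M[C]_(m, n)) i j : adjmx A i j = (A j i)^*.
Proof. by rewrite !mxE. Qed.

Lemma adjmx_mul m n p (A : 'M[C]_(m, n)) (B : 'M[C]_(n, p)) :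
  adjmx (A *m B) = adjmx B *m adjmx A.
Proof. by rewrite /adjmx map_mxM trmx_mul. Qed.

Lemma adjmxD m n (A B : 'M[C]_(m, n)) : adjmx (A + B) = adjmx A + adjmx B.
Proof. by apply/matrixP => i j; rewrite !mxE rmorphD. Qed.

Lemma adjmxZ m n (c : C) (A : 'M[C]_(m, n)) : adjmx (c *: A) = c^* *: adjmx A.
Proof. by apply/matrixP => i j; rewrite !mxE rmorphM. Qed.

Lemma adjmxK m n (A : 'M[C]_(m, n)) : adjmx (adjmx A) = A.
Proof. by apply/matrixP => i j; rewrite !mxE conjCK. Qed.

Lemma adjmx_tC n (A : 'M[C]_n) : adjmx A = (A ^t Num.conj)%sesqui.
Proof. by apply/matrixP => i j; rewrite !mxE. Qed.

Lemma qformB n (A B : 'M[C]_n) v : qform (A - B) v = qform A v - qform B v.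
Proof. by rewrite /qform mulmxBr mulmxBl !mxE. Qed.

Lemma qform_adjmx n (A : 'M[C]_n) v : qform (adjmx A) v = (qform A v)^*.
Proof.
rewrite /qform; have -> : adjmx v *m adjmx A *m v = adjmx (adjmx v *m A *m v).
  by rewrite !adjmx_mul adjmxK mulmxA.
by rewrite !mxE.
Qed.

Lemma qform_mxtrace n (A : 'M[C]_n) v : qform A v = \tr (A *m (v *m adjmx v)).
Proof. by rewrite /qform mulmxA mxtrace_mulC mulmxA /mxtrace big_ord1. Qed.

Lemma adjmx_delta n (i : 'I_n) : adjmx (delta_mx i 0 : 'cV[C]_n) = delta_mx 0 i.
Proof. by apply/matrixP => r s; rewrite adjmxE !mxE ord1 eqxx andbT rmorph_nat. Qed.

Lemma adjmx_delta_mul_delta n (B : 'M[C]_n) (i j : 'I_n) :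
  adjmx (delta_mx i 0 : 'cV[C]_n) *m B *m (delta_mx j 0 : 'cV_n) = (B i j)%:M.
Proof.
by apply/matrixP => r s; rewrite !ord1 adjmx_delta -rowE -colE !mxE eqxx mulr1n.
Qed.

Lemma qform_delta_add n (B : 'M[C]_n) (i j : 'I_n) (c : C) :
  qform B (delta_mx i 0 + c *: delta_mx j 0)
  = B i i + c * B i j + c^* * B j i + c^* * c * B j j.
Proof.
rewrite /qform adjmxD adjmxZ !(mulmxDl, mulmxDr) -!scalemxAl -!scalemxAr.
by rewrite !adjmx_delta_mul_delta !mxE eqxx !mulr1n; ring.
Qed.

Lemma qform_eq0 n (B : 'M[C]_n) : (forall v, qform B v = 0) -> B = 0.
Proof.
(* Polarisation: test on e_i, e_i + e_j and e_i + 'i e_j. *)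
move=> qB0; have Bkk k : B k k = 0.
  by have := qB0 (delta_mx k 0 + 0 *: delta_mx k 0);
    rewrite qform_delta_add conjC0 !mul0r !addr0.
apply/matrixP => i j; rewrite mxE.
have := qB0 (delta_mx i 0 + 1 *: delta_mx j 0).
rewrite qform_delta_add !Bkk conjC1 !mul1r add0r addr0 => skewB.
have := qB0 (delta_mx i 0 + 'i *: delta_mx j 0).
rewrite qform_delta_add !Bkk conjCi mulr0 add0r addr0 => /eqP.
rewrite mulNr -mulrBr mulf_eq0 (negbTE (neq0Ci C)) subr_eq0 => /eqP symB.
by apply/eqP; move: skewB; rewrite symB -mulr2n => /eqP; rewrite mulrn_eq0.
Qed.

Lemma psd_adjmx n (A : 'M[C]_n) : psd A -> adjmx A = A.
Proof.
move=> psdA; apply/eqP; rewrite -subr_eq0; apply/eqP/qform_eq0 => v.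
by rewrite qformB qform_adjmx conj_Creal ?subrr // ger0_real // psdA.
Qed.

Lemma psd_mul_adjmx n (v : 'cV[C]_n) : psd (v *m adjmx v).
Proof.
move=> w; have -> : adjmx w *m (v *m adjmx v) *m w
                    = (adjmx w *m v) *m adjmx (adjmx w *m v).
  by rewrite adjmx_mul adjmxK !mulmxA.
by rewrite mxE big_ord1 adjmxE mul_conjC_ge0.
Qed.

Lemma psd_conjmx_diag n (Z P : 'M[C]_n) i : psd Z -> 0 <= (P *m Z *m adjmx P) i i.
Proof.
move=> /(_ (adjmx (row i P))); rewrite adjmxK.
have -> : adjmx (row i P) = col i (adjmx P) by apply/matrixP => r s; rewrite !mxE.
by rewrite -!row_mul colE mulmxA -colE !mxE.
Qed.

Lemma mxtrace_mul_psd_ge0 n (N Z : 'M[C]_n) : psd N -> psd Z -> 0 <= \tr (N *m Z).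
Proof.
(* With N = P^* diag(d) P unitarily, tr(N Z) = sum_i d_i (P Z P^* )_ii. *)
move=> psdN psdZ; have Nnormal : N \is normalmx.
  by apply/normalmxP; rewrite -adjmx_tC psd_adjmx.
have /orthomx_spectralP := Nnormal; have Punitary := spectral_unitarymx N.
set P := spectralmx N; set d := spectral_diag N.
rewrite invmx_unitary // -adjmx_tC => defN.
have PPt : P *m adjmx P = 1%:M by rewrite adjmx_tC; apply/unitarymxP.
have dE i : d 0 i = (P *m N *m adjmx P) i i.
  by rewrite defN !mulmxA PPt mul1mx -mulmxA PPt mulmx1 mxE eqxx mulr1n.
rewrite defN -!mulmxA mxtrace_mulC -!mulmxA mul_diag_mx /mxtrace.
apply: sumr_ge0 => i _; rewrite mxE dE !mulmxA.
by apply: mulr_ge0; apply: psd_conjmx_diag.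
Qed.

End Positivity.

Section DualPOVM.
Variable C : numClosedFieldType.

Lemma trace_dual_psd n (L : {linear 'M[C]_n -> 'M[C]_n}) (N : 'M[C]_n) :
  positive_map L -> psd N -> psd (trace_dual L N).
Proof.
move=> posL psdN v; change (0 <= qform (trace_dual L N) v).
rewrite qform_mxtrace mxtrace_dual; apply: mxtrace_mul_psd_ge0 => //.
exact/posL/psd_mul_adjmx.
Qed.

Lemma trace_dual_povm n (L : {linear 'M[C]_n -> 'M[C]_n})
    (O : finType) (E : O -> 'M[C]_n) :
  positive_map L -> trace_preserving L -> povm E -> povm (fun o => trace_dual L (E o)).
Proof.
move=> posL trL [psdE sumE]; split=> [o|]; first exact: trace_dual_psd.
apply: mxtrace_mul_inj => Y; rewrite mulmx_suml raddf_sum /=.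
under eq_bigr do rewrite mxtrace_dual.
by rewrite -raddf_sum /= -mulmx_suml sumE !mul1mx trL.
Qed.

End DualPOVM.

Theorem proposition1 (C : numClosedFieldType) (nA n1 n2 : nat)
  (rho : 'M[C]_(nA * n1 * n2)) (Hrho : density rho)
  (L1 : {linear 'M[C]_n1 -> 'M[C]_n1}) (L2 : {linear 'M[C]_n2 -> 'M[C]_n2})
  (HL1p : positive_map L1) (HL1t : trace_preserving L1)
  (HL2p : positive_map L2) (HL2t : trace_preserving L2)
  (X A : finType) (M : X -> A -> 'M[C]_nA) (HM : forall x, povm (M x))
  (Y1 B1 Y2 B2 : finType)
  (N1 : Y1 -> B1 -> 'M[C]_n1) (HN1 : forall y1, povm (N1 y1))
  (N2 : Y2 -> B2 -> 'M[C]_n2) (HN2 : forall y2, povm (N2 y2)) :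
  let rho_t := tens_map (tens_map id L1) L2 rho in
  quantum_realisation
    (fun (a : A) (b1 : B1) (b2 : B2) (x : X) (y1 : Y1) (y2 : Y2) =>
       \tr ((M x a *t N1 y1 b1 *t N2 y2 b2) *m rho_t)).
Proof.
move=> rho_t.
exists nA, n1, n2, rho, M.
exists (fun y b => trace_dual L1 (N1 y b)), (fun y b => trace_dual L2 (N2 y b)).
split=> // [y1|y2|a b1 b2 x y1 y2]; try exact: trace_dual_povm.
apply: mxtrace_tens_map => Y; last by rewrite mxtrace_dual.
by apply: mxtrace_tens_map => // Y'; rewrite mxtrace_dual.
Qed.
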